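(* Let $X$ be a Banach space, $F$ a Banach lattice, and let $(T_n)$ be a sequence of limitedly L-weakly compact operators from $X$ to $F$ converging in operator norm to an operator $T:X\to F$. Then $T$ is limitedly L-weakly compact.
   Context: All vector spaces are real and operators are linear and bounded. For a subset $A$ of a Banach lattice $F$, $\mathrm{sol}(A)=\bigcup_{a\in A}[-|a|,|a|]$. A subset $A\subseteq F$ is an Lwc-set if every disjoint sequence in $\mathrm{sol}(A)$ is norm-null. A bounded subset $A$ of a Banach space $X$ is limited if every weak$^\ast$-null sequence in $X'$ converges to $0$ uniformly on $A$. An operator $T:X\to F$ is limitedly L-weakly compact if $T$ maps every limited subset of $X$ onto an Lwc-subset of $F$. *)

From HB Require Import structures.
From mathcomp Require Import all_boot all_order all_algebra.
From mathcomp Require Import all_classical all_reals.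
From mathcomp Require Import topology normedtype sequences.
Set Implicit Arguments. Unset Strict Implicit. Unset Printing Implicit Defensive.
Import Order.TTheory GRing.Theory Num.Theory.
Import numFieldNormedType.Exports.
Local Open Scope classical_set_scope.
Local Open Scope ring_scope.

Definition bounded_linear (R : realType) (X Y : normedModType R) (T : X -> Y) :=
  linear T /\ continuous T.

(* Elements of the dual X' are bounded linear functionals X -> R. *)
Definition weakstar_null (R : realType) (X : normedModType R)
  (f : nat -> X -> R) :=
  (forall n, bounded_linear (f n)) /\ (forall x, (fun n => f n x) @ \oo --> 0).

Definition limited (R : realType) (X : normedModType R) (A : set X) :=
  (exists M : R, forall a, A a -> `|a| <= M) /\
  (forall f : nat -> X -> R, weakstar_null f ->
     forall eps : R, 0 < eps ->
       \forall n \near \oo, forall a, A a -> `|f n a| <= eps).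

(* Banach lattice structure on a real Banach space F, given by the lattice
   join; the order is x <= y iff x \/ y = y. *)
Record BanachLattice (R : realType) (F : completeNormedModType R) := {
  bl_join : F -> F -> F;
  bl_joinC : forall x y, bl_join x y = bl_join y x;
  bl_joinA : forall x y z, bl_join x (bl_join y z) = bl_join (bl_join x y) z;
  bl_joinxx : forall x, bl_join x x = x;
  (* translation invariance of the order *)
  bl_joinD : forall x y z, bl_join (x + z) (y + z) = bl_join x y + z;
  (* positive homogeneity of the order *)
  bl_joinZ : forall (a : R) x y, 0 <= a ->
     bl_join (a *: x) (a *: y) = a *: bl_join x y;
  (* lattice norm: |x| <= |y| implies ||x|| <= ||y|| *)
  bl_norm_mono : forall x y,
     bl_join (bl_join x (- x)) (bl_join y (- y)) = bl_join y (- y) ->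
     `|x| <= `|y|
}.

Section BL.
Variables (R : realType) (F : completeNormedModType R) (L : BanachLattice F).
Definition bl_le (x y : F) : Prop := bl_join L x y = y.
Definition bl_meet (x y : F) : F := - bl_join L (- x) (- y).
Definition bl_abs (x : F) : F := bl_join L x (- x).
Definition bl_sol (A : set F) : set F :=
  [set y | exists2 a, A a & bl_le (bl_abs y) (bl_abs a)].
Definition bl_disjoint_seq (u : nat -> F) : Prop :=
  forall n m, n <> m -> bl_meet (bl_abs (u n)) (bl_abs (u m)) = 0.
Definition Lwc_set (A : set F) : Prop :=
  forall u : nat -> F, (forall n, bl_sol A (u n)) -> bl_disjoint_seq u ->
    (fun n => `|u n|) @ \oo --> 0.
End BL.

Definition limitedly_Lwc (R : realType) (X : normedModType R)
  (F : completeNormedModType R) (L : BanachLattice F) (T : X -> F) :=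
  forall A : set X, limited A -> Lwc_set L (T @` A).

(* Operator-norm convergence T_n -> T: for every eps > 0, eventually
   ||T_n - T|| <= eps, i.e. ||T_n x - T x|| <= eps ||x|| for all x. *)
Definition opnorm_cvg (R : realType) (X Y : normedModType R)
  (Tn : nat -> X -> Y) (T : X -> Y) :=
  forall eps : R, 0 < eps ->
    \forall n \near \oo, forall x, `|Tn n x - T x| <= eps * `|x|.

(** Operator-norm limits preserve the property because Lwc sets are closed
    under uniform approximation: if every element of [B] is [eps]-close to an
    element of an Lwc set [B'], a disjoint sequence [u] in [sol B] yields, via
    [w_k = |u_k| /\ |p_k|] with [p_k] in [B'], a disjoint sequence in [sol B']
    with [||u_k|| <= ||w_k|| + eps].  On a limited (hence bounded) set [A],
    [T_N A] approximates [T A] uniformly once [||T_N - T||] is small. *)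

From mathcomp Require Import all_boot all_order all_algebra.
From mathcomp Require Import all_classical all_reals.
From mathcomp Require Import topology normedtype sequences.
Set Implicit Arguments. Unset Strict Implicit. Unset Printing Implicit Defensive.
Import Order.TTheory GRing.Theory Num.Theory.
Import numFieldNormedType.Exports.
Local Open Scope classical_set_scope.
Local Open Scope ring_scope.

Section BanachLatticeTheory.
Variables (R : realType) (F : completeNormedModType R) (L : BanachLattice F).

Local Notation le := (bl_le L).
Local Notation join := (bl_join L).
Local Notation meet := (bl_meet L).
Local Notation abs := (bl_abs L).

Lemma bl_le_refl x : le x x.
Proof. exact: bl_joinxx. Qed.

Lemma bl_le_trans x y z : le x y -> le y z -> le x z.
Proof. by rewrite /bl_le => xy yz; rewrite -yz bl_joinA xy. Qed.

Lemma bl_le_anti x y : le x y -> le y x -> x = y.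
Proof. by rewrite /bl_le => xy yx; rewrite -xy bl_joinC yx. Qed.

Lemma bl_le_joinl x y : le x (join x y).
Proof. by rewrite /bl_le bl_joinA bl_joinxx. Qed.

Lemma bl_le_joinr x y : le y (join x y).
Proof. by rewrite bl_joinC; apply: bl_le_joinl. Qed.

Lemma bl_join_le x y z : le x z -> le y z -> le (join x y) z.
Proof. by rewrite /bl_le => xz yz; rewrite -bl_joinA yz xz. Qed.

Lemma bl_leD2r z x y : le x y -> le (x + z) (y + z).
Proof. by rewrite /bl_le => xy; rewrite bl_joinD xy. Qed.

Lemma bl_leD x y z t : le x y -> le z t -> le (x + z) (y + t).
Proof.
move=> xy zt; apply: (bl_le_trans (bl_leD2r z xy)).
by rewrite (addrC y z) (addrC y t); apply: bl_leD2r.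
Qed.

Lemma bl_leN x y : le x y -> le (- y) (- x).
Proof.
move=> /(bl_leD2r (- x - y)).
by rewrite addrA subrr add0r addrCA subrr addr0.
Qed.

Lemma bl_meet_lel x y : le (meet x y) x.
Proof. by have := bl_leN (bl_le_joinl (- x) (- y)); rewrite opprK. Qed.

Lemma bl_meet_ler x y : le (meet x y) y.
Proof. by have := bl_leN (bl_le_joinr (- x) (- y)); rewrite opprK. Qed.

Lemma bl_le_meet x y z : le z x -> le z y -> le z (meet x y).
Proof.
by move=> /bl_leN zx /bl_leN zy; have := bl_leN (bl_join_le zx zy); rewrite opprK.
Qed.

Lemma bl_abs_ge x : le x (abs x).
Proof. exact: bl_le_joinl. Qed.

Lemma bl_abs_geN x : le (- x) (abs x).
Proof. exact: bl_le_joinr. Qed.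

(* [0 = x - x <= 2 |x|], and halving is allowed by positive homogeneity. *)
Lemma bl_abs_ge0 x : le 0 (abs x).
Proof.
have two_abs : le 0 ((2 : R) *: abs x).
  by rewrite scaler_nat mulr2n -(subrr x); apply: bl_leD; [apply: bl_abs_ge|apply: bl_abs_geN].
have half_ge0 : 0 <= (2 : R)^-1 by rewrite invr_ge0 ler0n.
have := @bl_joinZ R F L 2^-1 0 ((2 : R) *: abs x) half_ge0.
by rewrite two_abs scaler0 scalerA mulVf ?pnatr_eq0 // scale1r.
Qed.

Lemma bl_abs_id x : le 0 x -> abs x = x.
Proof.
move=> x0; have Nxx : le (- x) x by apply: (bl_le_trans _ x0); rewrite -oppr0; apply: bl_leN.
by rewrite /bl_abs bl_joinC.
Qed.

Lemma bl_abs_abs x : abs (abs x) = abs x.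
Proof. exact/bl_abs_id/bl_abs_ge0. Qed.

Lemma bl_absD x y : le (abs (x + y)) (abs x + abs y).
Proof.
apply: bl_join_le; first by apply: bl_leD; apply: bl_abs_ge.
by rewrite opprD; apply: bl_leD; apply: bl_abs_geN.
Qed.

Lemma bl_norm_le x y : le (abs x) (abs y) -> `|x| <= `|y|.
Proof. exact: bl_norm_mono. Qed.

Lemma bl_norm_abs x : `|abs x| = `|x|.
Proof.
by apply/eqP; rewrite eq_le; apply/andP; split; apply: bl_norm_le;
  rewrite bl_abs_abs; apply: bl_le_refl.
Qed.

(* [|u| - |u| /\ |v| = 0 \/ (|u| - |v|) <= 0 \/ (|p| - |v|) <= |p - v|]. *)
Lemma bl_sub_meet_le u p v :
  le (abs u) (abs p) -> le (abs u - meet (abs u) (abs v)) (abs (p - v)).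
Proof.
move=> up; rewrite /bl_meet opprK addrC -bl_joinD addNr.
apply: bl_join_le; first exact: bl_abs_ge0.
rewrite addrC; apply: (bl_le_trans (bl_leD2r _ up)).
by have := bl_leD2r (- abs v) (bl_absD (p - v) v); rewrite subrK addrK.
Qed.

Lemma bl_norm_le_meet u p v :
  le (abs u) (abs p) -> `|u| <= `|meet (abs u) (abs v)| + `|p - v|.
Proof.
move=> up; set w := meet _ _.
have w_ge0 : le 0 (abs u - w).
  by rewrite -(subrr w); apply/bl_leD2r/bl_meet_lel.
rewrite -(bl_norm_abs u) -{1}(subrK w (abs u)) addrC.
apply: (le_trans (ler_normD _ _)); rewrite lerD2l.
by apply: bl_norm_le; rewrite bl_abs_id //; apply: bl_sub_meet_le.
Qed.

Lemma bl_meet_eq0_le a b w1 w2 :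
  meet a b = 0 -> le 0 w1 -> le 0 w2 -> le w1 a -> le w2 b -> meet w1 w2 = 0.
Proof.
move=> ab0 w1_ge0 w2_ge0 w1a w2b.
apply: bl_le_anti; last exact: bl_le_meet.
rewrite -ab0; apply: bl_le_meet.
- exact: bl_le_trans (bl_meet_lel _ _) w1a.
- exact: bl_le_trans (bl_meet_ler _ _) w2b.
Qed.

Lemma Lwc_set_approx (B : set F) :
  (forall eps, 0 < eps -> exists2 B', Lwc_set L B' &
     forall b, B b -> exists2 b', B' b' & `|b - b'| <= eps) ->
  Lwc_set L B.
Proof.
move=> approx u solBu disj_u; apply/cvgrPdist_le => eps eps_gt0.
have eps2_gt0 : 0 < eps / 2 by rewrite divr_gt0.
have [B' LwcB' nearB'] := approx _ eps2_gt0.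
have /choice[p pP] k : exists p, B' p /\
    exists2 b, le (abs (u k)) (abs b) & `|b - p| <= eps / 2.
  have [b Bb ub] := solBu k; have [b' B'b' bb'] := nearB' b Bb.
  by exists b'; split=> //; exists b.
pose w k := meet (abs (u k)) (abs (p k)).
have w_ge0 k : le 0 (w k) by apply: bl_le_meet; apply: bl_abs_ge0.
have w_cvg : (fun k => `|w k|) @ \oo --> 0.
  apply: LwcB' => [k|k m km].
    by exists (p k); [exact: (pP k).1 | rewrite bl_abs_id //; apply: bl_meet_ler].
  rewrite !bl_abs_id //; apply: bl_meet_eq0_le (disj_u k m km) _ _ _ _ => //.
  - exact: bl_meet_lel.
  - exact: bl_meet_lel.
move/cvgrPdist_le : w_cvg => /(_ _ eps2_gt0); apply: filterS => k.
rewrite !sub0r !normrN !normr_id => wk.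
have [_ [b ub bp]] := pP k.
apply: (le_trans (@bl_norm_le_meet (u k) b (p k) ub)).
by rewrite [eps]splitr; apply: lerD => //; rewrite /bl_meet normrN.
Qed.

End BanachLatticeTheory.

Lemma opnorm_cvg_bounded (R : realType) (X Y : normedModType R)
    (Tn : nat -> X -> Y) (T : X -> Y) (A : set X) (M : R) :
  (forall a, A a -> `|a| <= M) -> opnorm_cvg Tn T ->
  forall eps, 0 < eps -> \forall n \near \oo, forall a, A a -> `|Tn n a - T a| <= eps.
Proof.
move=> AM cvgT eps eps_gt0.
have M1_gt0 : 0 < `|M| + 1 by rewrite ltr_pwDr // normr_ge0.
have epsM1_gt0 : 0 < eps / (`|M| + 1) by rewrite divr_gt0.
apply: filterS (cvgT _ epsM1_gt0) => n Tn_near a Aa.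
have a_le : `|a| <= `|M| + 1.
  by rewrite (le_trans (AM a Aa)) // (le_trans (ler_norm M)) // lerDl.
apply: (le_trans (Tn_near a)); apply: (le_trans (ler_wpM2l (ltW epsM1_gt0) a_le)).
by rewrite divfK // gt_eqF.
Qed.

Theorem proposition3p2 (R : realType) (X : completeNormedModType R)
  (F : completeNormedModType R) (L : BanachLattice F)
  (Tn : nat -> X -> F) (T : X -> F) :
  (forall n, bounded_linear (Tn n)) ->
  (forall n, limitedly_Lwc L (Tn n)) ->
  bounded_linear T ->
  opnorm_cvg Tn T ->
  limitedly_Lwc L T.
Proof.
move=> _ Tn_Lwc _ cvgT A limA.
have [[M AM] _] := limA.
apply: Lwc_set_approx => eps eps_gt0.
have [N _ TN_near] := opnorm_cvg_bounded AM cvgT eps_gt0.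
exists (Tn N @` A); first exact: Tn_Lwc N A limA.
move=> _ [a Aa <-]; exists (Tn N a); first by exists a.
by rewrite distrC; exact: (TN_near N (leqnn N) a Aa).
Qed.
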